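(* Let $\beta\colon Y\times Y\to[0,\infty)$ be arbitrary and define the interface velocity $V_{\mathrm{int}}=\{\{v\}\}-\beta[\![p]\!]$. For the semi-discretization described below, choose $$f^\rho=\Big(\{\{\rho\}\}_{\log}-\tfrac12[\![\rho]\!]\operatorname{sign}(V_{\mathrm{int}})\Big)V_{\mathrm{int}},\qquad f^{\rho e}=\frac{1}{\gamma-1}\frac{f^\rho}{\{\{\rho/p\}\}_{\log}}+\{\{p\}\}V_{\mathrm{int}},\qquad v^{\mathrm{num}}=V_{\mathrm{int}},$$ $f^{\rho v}$ any consistent two-point discretization of $\rho v^2+p$, and $\rho^{\mathrm{num}}$ any consistent two-point mean of $\rho$. Then the semi-discretization is entropy-stable for the entropy pair $U=-\rho s$, $F=-\rho sv$, $s=\log(p/\rho^\gamma)$.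
   Context: Let $\gamma>1$. $Y$ is the set of states $(\rho,\rho v,\rho e)$ with $\rho>0$, $p=(\gamma-1)\rho e>0$, $v=\rho v/\rho$; a time-independent gravity potential $\phi_i$ is attached to each cell. The scheme is $\partial_t\rho_i+\frac{f^\rho_{i+1/2}-f^\rho_{i-1/2}}{\Delta x}=0$, $\partial_t(\rho v)_i+\frac{f^{\rho v}_{i+1/2}-f^{\rho v}_{i-1/2}}{\Delta x}+\frac{\rho^{\mathrm{num}}_{i+1/2}[\![\phi]\!]_{i+1/2}+\rho^{\mathrm{num}}_{i-1/2}[\![\phi]\!]_{i-1/2}}{2\Delta x}=0$, $\partial_t(\rho e)_i+\frac{f^{\rho e}_{i+1/2}-f^{\rho e}_{i-1/2}}{\Delta x}-\frac{v^{\mathrm{num}}_{i+1/2}[\![p]\!]_{i+1/2}+v^{\mathrm{num}}_{i-1/2}[\![p]\!]_{i-1/2}}{2\Delta x}=0$, with subscript $i+1/2$ meaning evaluation at $(u_-,u_+)=(u_i,u_{i+1})$. Notation: $\{\{a\}\}=\tfrac12(a_-+a_+)$, $[\![a]\!]=a_+-a_-$, logarithmic mean $\{\{a\}\}_{\log}=[\![a]\!]/[\![\log a]\!]$ if $a_-\ne a_+$, $=a_-$ otherwise. Entropy-stable for $(U,F)$ means: there exists a two-point $F^{\mathrm{num}}$ with $F^{\mathrm{num}}(u,u)=F(u)$ such that for all grid states and all $i$, $U'(u_i)\cdot\partial_tu_i\le-\frac{1}{\Delta x}(F^{\mathrm{num}}(u_i,u_{i+1})-F^{\mathrm{num}}(u_{i-1},u_i))$,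 with $U'$ the gradient with respect to $(\rho,\rho v,\rho e)$. *)

From Stdlib Require Import Reals ZArith.
Open Scope R_scope.

(* A state (rho, rho v, rho e) of the conserved variables. *)
Record state := mkst { rho : R; mom : R; ener : R }.

Definition vel (u : state) : R := mom u / rho u.
Definition pres (gamma : R) (u : state) : R := (gamma - 1) * ener u.

Definition inY (gamma : R) (u : state) : Prop :=
  0 < rho u /\ 0 < pres gamma u.

(* two-point operators, (um, up) = (u_-, u_+) *)
Definition avg (a b : R) : R := (a + b) / 2.
Definition jump (a b : R) : R := b - a.
Definition logmean (a b : R) : R :=
  if Req_EM_T a b then a else (b - a) / (ln b - ln a).
Definition sgn (x : R) : R :=
  if Rlt_dec 0 x then 1 else if Rlt_dec x 0 then -1 else 0.

Definition Vint gamma (beta : state -> state -> R) (um up : state) : R :=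
  avg (vel um) (vel up) - beta um up * jump (pres gamma um) (pres gamma up).

Definition frho gamma beta (um up : state) : R :=
  (logmean (rho um) (rho up) - / 2 * jump (rho um) (rho up) * sgn (Vint gamma beta um up))
  * Vint gamma beta um up.

Definition fener gamma beta (um up : state) : R :=
  / (gamma - 1) * (frho gamma beta um up /
     logmean (rho um / pres gamma um) (rho up / pres gamma up))
  + avg (pres gamma um) (pres gamma up) * Vint gamma beta um up.

Definition vnum gamma beta (um up : state) : R := Vint gamma beta um up.

(* Time derivatives of the semi-discretization at cell i;
   u : grid states indexed by Z, phi : gravity potential, dx : mesh size,
   frv : momentum flux, rnum : density mean. *)
Section Scheme.
Variables (gamma : R) (beta frv rnum : state -> state -> R)
          (u : Z -> state) (phi : Z -> R) (dx : R).

Definition dt_rho (i : Z) : R :=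
  - (frho gamma beta (u i) (u (i+1)%Z) - frho gamma beta (u (i-1)%Z) (u i)) / dx.

Definition dt_mom (i : Z) : R :=
  - (frv (u i) (u (i+1)%Z) - frv (u (i-1)%Z) (u i)) / dx
  - (rnum (u i) (u (i+1)%Z) * jump (phi i) (phi (i+1)%Z)
     + rnum (u (i-1)%Z) (u i) * jump (phi (i-1)%Z) (phi i)) / (2 * dx).

Definition dt_ener (i : Z) : R :=
  - (fener gamma beta (u i) (u (i+1)%Z) - fener gamma beta (u (i-1)%Z) (u i)) / dx
  + (vnum gamma beta (u i) (u (i+1)%Z) * jump (pres gamma (u i)) (pres gamma (u (i+1)%Z))
     + vnum gamma beta (u (i-1)%Z) (u i) * jump (pres gamma (u (i-1)%Z)) (pres gamma (u i)))
    / (2 * dx).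
End Scheme.

Definition spec_ent gamma (u : state) : R := ln (pres gamma u / Rpower (rho u) gamma).
Definition Uent gamma (u : state) : R := - rho u * spec_ent gamma u.
Definition Fent gamma (u : state) : R := - rho u * spec_ent gamma u * vel u.

Definition is_gradU gamma (dU0 dU1 dU2 : state -> R) : Prop :=
  forall u, inY gamma u ->
    derivable_pt_lim (fun x => Uent gamma (mkst x (mom u) (ener u))) (rho u) (dU0 u) /\
    derivable_pt_lim (fun x => Uent gamma (mkst (rho u) x (ener u))) (mom u) (dU1 u) /\
    derivable_pt_lim (fun x => Uent gamma (mkst (rho u) (mom u) x)) (ener u) (dU2 u).

(* Contract the semi-discretization with the entropy variables
   U'(u) = (gamma - s, 0, -(gamma - 1) rho / p).  Since U does not depend on rho v, the momentum
   equation, and with it the momentum flux and the gravity source, drops out.  As in Tadmor's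
   theory, the contracted update is a difference of interface entropy fluxes plus half the entropy
   production of the two adjacent interfaces.  The logarithmic means make the central part of the
   fluxes entropy conservative, so the production reduces to the upwind part
   -(gamma - 1)/2 [[rho]] [[log rho]] |V_int|, which is nonpositive because log is increasing. *)

From Stdlib Require Import Reals ZArith Lra.
From Coquelicot Require Import Coquelicot.
Open Scope R_scope.

Lemma logmean_gt0 a b : 0 < a -> 0 < b -> 0 < logmean a b.
Proof.
  intros Ha Hb; unfold logmean.
  destruct (Req_EM_T a b) as [_ | Hab]; [exact Ha |].
  destruct (Rtotal_order a b) as [Hlt | [Heq | Hgt]]; [| contradiction |].
  - apply Rdiv_lt_0_compat; [lra |].
    pose proof (ln_increasing a b Ha Hlt); lra.
  - replace ((b - a) / (ln b - ln a)) with ((a - b) / (ln a - ln b)) by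
      (pose proof (ln_increasing b a Hb Hgt); field; lra).
    apply Rdiv_lt_0_compat; [lra |].
    pose proof (ln_increasing b a Hb Hgt); lra.
Qed.

Lemma logmean_mul_ln_jump a b : 0 < a -> 0 < b -> logmean a b * (ln b - ln a) = b - a.
Proof.
  intros Ha Hb; unfold logmean.
  destruct (Req_EM_T a b) as [-> | Hab]; [ring |].
  field; intro Hln; apply Hab, ln_inv; [exact Ha | exact Hb | lra].
Qed.

Lemma jump_mul_ln_jump_ge0 a b : 0 < a -> 0 < b -> 0 <= (b - a) * (ln b - ln a).
Proof.
  intros Ha Hb; destruct (Rle_or_lt a b) as [Hab | Hba].
  - pose proof (ln_le a b Ha Hab); nra.
  - pose proof (ln_increasing b a Hb Hba); nra.
Qed.

Lemma sgn_mul_self V : sgn V * V = Rabs V.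
Proof.
  unfold sgn; destruct (Rlt_dec 0 V); [rewrite Rabs_pos_eq; lra |].
  destruct (Rlt_dec V 0); [rewrite Rabs_left; lra |].
  replace V with 0 by lra; rewrite Rabs_R0; ring.
Qed.

Lemma ln_div_Rpower P x g : 0 < P -> ln (P / Rpower x g) = ln P - g * ln x.
Proof.
  intros HP; unfold Rdiv; rewrite ln_mult, ln_Rinv, ln_Rpower;
    [ring | apply exp_pos | exact HP | apply Rinv_0_lt_compat, exp_pos].
Qed.

Lemma spec_ent_ln g u : 0 < pres g u -> spec_ent g u = ln (pres g u) - g * ln (rho u).
Proof. exact (ln_div_Rpower _ _ _). Qed.

Definition entvar_rho g (u : state) : R := g - spec_ent g u.
Definition entvar_ener g (u : state) : R := - (g - 1) * (rho u / pres g u).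

Section Gradient.
Variables (g : R) (u : state).
Hypothesis (hg : 1 < g) (hu : inY g u).

Lemma Uent_derive_rho :
  derivable_pt_lim (fun x => Uent g (mkst x (mom u) (ener u))) (rho u) (entvar_rho g u).
Proof.
  destruct hu as [hr hp]; unfold entvar_rho; rewrite spec_ent_ln by exact hp.
  apply derivable_pt_lim_ext with (f := fun x => - x * (ln (pres g u) - g * ln x)).
  { intro x; unfold Uent, spec_ent; simpl; rewrite ln_div_Rpower by exact hp; reflexivity. }
  apply is_derive_Reals; auto_derive; [lra | field; lra].
Qed.

Lemma Uent_derive_mom :
  derivable_pt_lim (fun x => Uent g (mkst (rho u) x (ener u))) (mom u) 0.
Proof. exact (derivable_pt_lim_const (Uent g u) (mom u)). Qed.

Lemma Uent_derive_ener :
  derivable_pt_lim (fun x => Uent g (mkst (rho u) (mom u) x)) (ener u) (entvar_ener g u).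
Proof.
  destruct hu as [hr hp]; unfold pres in hp.
  assert (he : 0 < ener u) by (apply Rmult_lt_reg_l with (g - 1); lra).
  apply derivable_pt_lim_locally_ext with (a := 0) (b := ener u + 1)
    (f := fun x => - rho u * (ln ((g - 1) * x) - g * ln (rho u))); [lra | |].
  - intros x Hx; unfold Uent, spec_ent, pres; simpl.
    rewrite ln_div_Rpower; [reflexivity | apply Rmult_lt_0_compat; lra].
  - apply is_derive_Reals; auto_derive; [apply Rmult_lt_0_compat; lra |].
    unfold entvar_ener, pres; field; lra.
Qed.

End Gradient.

Lemma is_gradU_entvar g dU0 dU1 dU2 u : 1 < g -> is_gradU g dU0 dU1 dU2 -> inY g u ->
  dU0 u = entvar_rho g u /\ dU1 u = 0 /\ dU2 u = entvar_ener g u.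
Proof.
  intros hg hdU hu; destruct (hdU u hu) as [h0 [h1 h2]]; split; [| split];
    eapply uniqueness_limite;
    [exact h0 | apply Uent_derive_rho | exact h1 | apply Uent_derive_mom
    | exact h2 | apply Uent_derive_ener]; assumption.
Qed.

Definition entropy_production g beta (a b : state) : R :=
  jump (entvar_rho g a) (entvar_rho g b) * frho g beta a b
  + jump (entvar_ener g a) (entvar_ener g b) * fener g beta a b
  + avg (entvar_ener g a) (entvar_ener g b) * Vint g beta a b * jump (pres g a) (pres g b).

Lemma entropy_production_eq g beta a b : 1 < g -> inY g a -> inY g b ->
  entropy_production g beta a b
  = - (g - 1) / 2 * (jump (rho a) (rho b) * jump (ln (rho a)) (ln (rho b)))
    * Rabs (Vint g beta a b).
Proof.
  intros hg [hra hpa] [hrb hpb].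
  assert (hqa : 0 < rho a / pres g a) by (apply Rdiv_lt_0_compat; assumption).
  assert (hqb : 0 < rho b / pres g b) by (apply Rdiv_lt_0_compat; assumption).
  pose proof (logmean_mul_ln_jump _ _ hra hrb) as hLr.
  pose proof (logmean_mul_ln_jump _ _ hqa hqb) as hLq.
  pose proof (logmean_gt0 _ _ hqa hqb) as hLq_pos.
  rewrite !ln_div in hLq by assumption.
  unfold entropy_production, entvar_rho, entvar_ener, fener, frho, jump, avg.
  rewrite !spec_ent_ln, <- sgn_mul_self by assumption.
  set (Lr := logmean (rho a) (rho b)) in *.
  set (Lq := logmean (rho a / pres g a) (rho b / pres g b)) in *.
  set (V := Vint g beta a b).
  set (s := sgn V).
  set (f := (Lr - / 2 * (rho b - rho a) * s) * V).
  transitivity ((g - 1) * (f * (ln (rho b) - ln (rho a)) - (rho b - rho a) * V)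
    + f * ((ln (rho b) - ln (pres g b)) - (ln (rho a) - ln (pres g a))
           - (rho b / pres g b - rho a / pres g a) / Lq)).
  { field; lra. }
  rewrite <- hLq.
  unfold f; rewrite <- hLr.
  field; lra.
Qed.

Lemma entropy_production_le0 g beta a b : 1 < g -> inY g a -> inY g b ->
  entropy_production g beta a b <= 0.
Proof.
  intros hg ha hb; rewrite entropy_production_eq by assumption.
  assert (0 <= jump (rho a) (rho b) * jump (ln (rho a)) (ln (rho b)) * Rabs (Vint g beta a b)).
  { apply Rmult_le_pos; [apply jump_mul_ln_jump_ge0; apply ha || apply hb | apply Rabs_pos]. }
  nra.
Qed.

(* The last term accounts for the nonconservative product v^num [[p]] in the energy equation. *)
Definition entropy_flux g beta (a b : state) : R :=
  avg (entvar_rho g a) (entvar_rho g b) * frho g beta a b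
  + avg (entvar_ener g a) (entvar_ener g b) * fener g beta a b
  + jump (entvar_ener g a) (entvar_ener g b) * Vint g beta a b * jump (pres g a) (pres g b) / 4.

Lemma entropy_flux_consistent g beta u : 1 < g -> inY g u -> entropy_flux g beta u u = Fent g u.
Proof.
  intros hg [hr hp].
  unfold entropy_flux, Fent, entvar_rho, entvar_ener, fener, frho, logmean, Vint, jump, avg, vel.
  destruct (Req_EM_T (rho u) (rho u)) as [_ | ]; [| congruence].
  destruct (Req_EM_T (rho u / pres g u) (rho u / pres g u)) as [_ | ]; [| congruence].
  field; lra.
Qed.

Lemma entropy_balance g beta (u : Z -> state) dx i : dx <> 0 ->
  entvar_rho g (u i) * dt_rho g beta u dx i + entvar_ener g (u i) * dt_ener g beta u dx i
  = - / dx * (entropy_flux g beta (u i) (u (i+1)%Z) - entropy_flux g beta (u (i-1)%Z) (u i))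
    + (entropy_production g beta (u (i-1)%Z) (u i)
       + entropy_production g beta (u i) (u (i+1)%Z)) / (2 * dx).
Proof.
  intros hdx; unfold dt_rho, dt_ener, vnum, entropy_flux, entropy_production, jump, avg.
  field; exact hdx.
Qed.

Theorem mainTheorem13 (gamma : R) (hgamma : 1 < gamma)
  (beta frv rnum : state -> state -> R)
  (hbeta : forall um up, inY gamma um -> inY gamma up -> 0 <= beta um up)
  (hfrv : forall w, inY gamma w -> frv w w = rho w * vel w ^ 2 + pres gamma w)
  (hrnum : forall w, inY gamma w -> rnum w w = rho w)
  (dU0 dU1 dU2 : state -> R) (hdU : is_gradU gamma dU0 dU1 dU2) :
  exists Fnum : state -> state -> R,
    (forall w, inY gamma w -> Fnum w w = Fent gamma w) /\
    forall (u : Z -> state) (phi : Z -> R) (dx : R),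
      0 < dx -> (forall j, inY gamma (u j)) ->
      forall i : Z,
        dU0 (u i) * dt_rho gamma beta u dx i
        + dU1 (u i) * dt_mom frv rnum u phi dx i
        + dU2 (u i) * dt_ener gamma beta u dx i
        <= - / dx * (Fnum (u i) (u (i+1)%Z) - Fnum (u (i-1)%Z) (u i)).
Proof.
  exists (entropy_flux gamma beta); split.
  - intros w hw; exact (entropy_flux_consistent gamma beta w hgamma hw).
  - intros u phi dx hdx hu i.
    destruct (is_gradU_entvar _ _ _ _ (u i) hgamma hdU (hu i)) as [-> [-> ->]].
    rewrite Rmult_0_l, Rplus_0_r, entropy_balance by lra.
    pose proof (entropy_production_le0 gamma beta _ _ hgamma (hu (i-1)%Z) (hu i)).
    pose proof (entropy_production_le0 gamma beta _ _ hgamma (hu i) (hu (i+1)%Z)).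
    assert (0 < / (2 * dx)) by (apply Rinv_0_lt_compat; lra).
    nra.
Qed.
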